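(* For every band operator $A$ on $\ell^2(\mathbb{Z})$ and every $\varepsilon>0$ there are $l,r\in\mathbb{Z}$ such that $\nu(A)\le\nu_{l..r}(A)<\nu(A)+\varepsilon$.
   Context: A band operator on $\ell^2(\mathbb{Z})$ is a finite sum $\sum_{k=-w}^{w}M_{a^{(k)}}S^k$ with $a^{(k)}\in\ell^\infty(\mathbb{Z})$, $(Sx)_n=x_{n-1}$, $(M_ax)_n=a_nx_n$. $\nu(A):=\inf\{\|Ax\|:\|x\|=1\}$; for $l..r:=\{n\in\mathbb{Z}:l\le n\le r\}$, $\nu_{l..r}(A):=\inf\{\|Ax\|:\operatorname{supp}x\subseteq l..r,\ \|x\|=1\}$. *)

From Stdlib Require Import Reals ZArith List Lia.
From Coquelicot Require Import Coquelicot.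
Open Scope R_scope.

Definition summableZ (f : Z -> R) : Prop :=
  ex_series (fun n : nat => f (Z.of_nat n)) /\
  ex_series (fun n : nat => f (- Z.of_nat n - 1)%Z).

Definition SeriesZ (f : Z -> R) : R :=
  Series (fun n : nat => f (Z.of_nat n)) + Series (fun n : nat => f (- Z.of_nat n - 1)%Z).

Definition l2 (x : Z -> C) : Prop := summableZ (fun n => (Cmod (x n)) ^ 2).
Definition l2norm (x : Z -> C) : R := sqrt (SeriesZ (fun n => (Cmod (x n)) ^ 2)).

(* shift (S x)_n = x_{n-1}, so (S^k x)_n = x_{n-k}; multiplication (M_a x)_n = a_n x_n *)
Definition bounded_seqZ (a : Z -> C) : Prop := exists M : R, forall n, Cmod (a n) <= M.

(* band operator sum_{k=-w}^{w} M_{a k} S^k *)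
Definition band_apply (w : nat) (a : Z -> Z -> C) (x : Z -> C) : Z -> C :=
  fun n => fold_right Cplus (RtoC 0)
    (map (fun j : nat => let k := (Z.of_nat j - Z.of_nat w)%Z in Cmult (a k n) (x (n - k)%Z))
         (seq 0 (2 * w + 1))).

Definition nu (A : (Z -> C) -> (Z -> C)) : Rbar :=
  Glb_Rbar (fun t => exists x, l2 x /\ l2norm x = 1 /\ t = l2norm (A x)).

Definition nu_lr (A : (Z -> C) -> (Z -> C)) (l r : Z) : Rbar :=
  Glb_Rbar (fun t => exists x, l2 x /\
     (forall n, (n < l \/ r < n)%Z -> x n = RtoC 0) /\
     l2norm x = 1 /\ t = l2norm (A x)).

From Stdlib Require Import Reals ZArith List Lia Lra Psatz.
From Stdlib Require Import Classical FunctionalExtensionality.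
From Coquelicot Require Import Coquelicot.
Open Scope R_scope.

(* A band operator A is bounded on l^2: each diagonal is a bounded multiplier composed
   with an isometric shift.  Take a unit vector x with ||Ax|| close to nu(A) and cut it
   down to a box [-N, N-1] outside which it has norm d.  The truncation has norm at
   least 1 - d and its image under A is within ||A|| d of Ax, so after renormalising it
   is a unit vector supported in the box with ||Ay|| <= ||Ax|| + O(d).  The inequality
   nu(A) <= nu_{l..r}(A) is monotonicity of the infimum. *)

Lemma summableZ_le (f g : Z -> R) :
  (forall n, 0 <= f n <= g n) -> summableZ g -> summableZ f.
Proof.
  intros Hfg [Hg1 Hg2].
  split; [revert Hg1 | revert Hg2]; apply (@ex_series_le R_AbsRing R_CompleteNormedModule);
    intros k; unfold norm; simpl; rewrite Rabs_pos_eq; apply Hfg.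
Qed.

Lemma SeriesZ_le (f g : Z -> R) :
  (forall n, 0 <= f n <= g n) -> summableZ g -> SeriesZ f <= SeriesZ g.
Proof.
  intros Hfg [Hg1 Hg2]. unfold SeriesZ.
  apply Rplus_le_compat; apply Series_le; auto.
Qed.

Lemma SeriesZ_ge0 (f : Z -> R) :
  (forall n, 0 <= f n) -> summableZ f -> 0 <= SeriesZ f.
Proof.
  intros Hf Hsum.
  replace 0 with (SeriesZ (fun n => 0 * f n)).
  - apply SeriesZ_le; auto. intros n. specialize (Hf n). lra.
  - unfold SeriesZ. rewrite !Series_scal_l. ring.
Qed.

Lemma summableZ_plus (f g : Z -> R) :
  summableZ f -> summableZ g -> summableZ (fun n => f n + g n).
Proof.
  intros [Hf1 Hf2] [Hg1 Hg2].
  split; [exact (ex_series_plus _ _ Hf1 Hg1) | exact (ex_series_plus _ _ Hf2 Hg2)].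
Qed.

Lemma SeriesZ_plus (f g : Z -> R) :
  summableZ f -> summableZ g -> SeriesZ (fun n => f n + g n) = SeriesZ f + SeriesZ g.
Proof.
  intros [Hf1 Hf2] [Hg1 Hg2]. unfold SeriesZ.
  rewrite (Series_plus _ _ Hf1 Hg1), (Series_plus _ _ Hf2 Hg2). ring.
Qed.

Lemma summableZ_scal (c : R) (f : Z -> R) :
  summableZ f -> summableZ (fun n => c * f n).
Proof.
  intros [Hf1 Hf2].
  split; [exact (ex_series_scal_l c _ Hf1) | exact (ex_series_scal_l c _ Hf2)].
Qed.

Lemma SeriesZ_scal (c : R) (f : Z -> R) : SeriesZ (fun n => c * f n) = c * SeriesZ f.
Proof. unfold SeriesZ. rewrite !Series_scal_l. ring. Qed.

(* Shifting by one moves a single term between the two one-sided series. *)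
Lemma summableZ_SeriesZ_shift_pred (f : Z -> R) :
  summableZ f ->
  summableZ (fun n => f (n - 1)%Z) /\ SeriesZ (fun n => f (n - 1)%Z) = SeriesZ f.
Proof.
  intros [Hf1 Hf2]. unfold summableZ, SeriesZ.
  assert (Hpos : forall k : nat, f (Z.of_nat (S k) - 1)%Z = f (Z.of_nat k))
    by (intros k; f_equal; lia).
  assert (Hneg : forall k : nat, f (- Z.of_nat (S k) - 1)%Z = f (- Z.of_nat k - 1 - 1)%Z)
    by (intros k; f_equal; lia).
  assert (H1 : ex_series (fun k : nat => f (Z.of_nat k - 1)%Z)).
  { apply ex_series_incr_1. exact (ex_series_ext _ _ (fun k => eq_sym (Hpos k)) Hf1). }
  assert (H2 : ex_series (fun k : nat => f (- Z.of_nat k - 1 - 1)%Z)).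
  { apply ex_series_incr_1 in Hf2. exact (ex_series_ext _ _ Hneg Hf2). }
  split; [split; assumption |].
  rewrite (Series_incr_1 _ H1), (Series_incr_1 _ Hf2).
  rewrite (Series_ext _ _ Hpos), (Series_ext _ _ Hneg). simpl. ring.
Qed.

Lemma summableZ_SeriesZ_shift_succ (f : Z -> R) :
  summableZ f ->
  summableZ (fun n => f (n + 1)%Z) /\ SeriesZ (fun n => f (n + 1)%Z) = SeriesZ f.
Proof.
  intros [Hf1 Hf2]. unfold summableZ, SeriesZ.
  assert (Hpos : forall k : nat, f (Z.of_nat (S k)) = f (Z.of_nat k + 1)%Z)
    by (intros k; f_equal; lia).
  assert (Hneg : forall k : nat, f (- Z.of_nat (S k) - 1 + 1)%Z = f (- Z.of_nat k - 1)%Z)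
    by (intros k; f_equal; lia).
  assert (H1 : ex_series (fun k : nat => f (Z.of_nat k + 1)%Z)).
  { apply ex_series_incr_1 in Hf1. exact (ex_series_ext _ _ Hpos Hf1). }
  assert (H2 : ex_series (fun k : nat => f (- Z.of_nat k - 1 + 1)%Z)).
  { apply ex_series_incr_1. exact (ex_series_ext _ _ (fun k => eq_sym (Hneg k)) Hf2). }
  split; [split; assumption |].
  rewrite (Series_incr_1 _ H2), (Series_incr_1 _ Hf1).
  rewrite (Series_ext _ _ Hpos), (Series_ext _ _ Hneg). simpl. ring.
Qed.

Lemma summableZ_SeriesZ_shift (k : Z) (f : Z -> R) :
  summableZ f ->
  summableZ (fun n => f (n - k)%Z) /\ SeriesZ (fun n => f (n - k)%Z) = SeriesZ f.
Proof.
  revert f. induction k as [| k IH | k IH] using Z.peano_ind; intros f Hf.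
  - replace (fun n => f (n - 0)%Z) with f
      by (apply functional_extensionality; intros n; f_equal; lia).
    auto.
  - destruct (IH f Hf) as [Hk Ek].
    destruct (summableZ_SeriesZ_shift_pred _ Hk) as [Hk1 Ek1].
    replace (fun n => f (n - Z.succ k)%Z) with (fun n => f (n - 1 - k)%Z)
      by (apply functional_extensionality; intros n; f_equal; lia).
    split; [exact Hk1 | congruence].
  - destruct (IH f Hf) as [Hk Ek].
    destruct (summableZ_SeriesZ_shift_succ _ Hk) as [Hk1 Ek1].
    replace (fun n => f (n - Z.pred k)%Z) with (fun n => f (n + 1 - k)%Z)
      by (apply functional_extensionality; intros n; f_equal; lia).
    split; [exact Hk1 | congruence].
Qed.

Lemma l2norm_ge0 (x : Z -> C) : 0 <= l2norm x.
Proof. apply sqrt_pos. Qed.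

Lemma l2norm_sqr (x : Z -> C) : l2 x -> l2norm x ^ 2 = SeriesZ (fun n => Cmod (x n) ^ 2).
Proof.
  intros Hx. apply pow2_sqrt, SeriesZ_ge0; [intros n; apply pow2_ge_0 | exact Hx].
Qed.

Lemma l2_scal (c : C) (x : Z -> C) : l2 x -> l2 (fun n => (c * x n)%C).
Proof.
  intros Hx. unfold l2.
  replace (fun n => Cmod (c * x n)%C ^ 2) with (fun n => Cmod c ^ 2 * Cmod (x n) ^ 2)
    by (apply functional_extensionality; intros n; rewrite Cmod_mult; ring).
  now apply summableZ_scal.
Qed.

Lemma l2norm_scal (c : C) (x : Z -> C) : l2norm (fun n => (c * x n)%C) = Cmod c * l2norm x.
Proof.
  unfold l2norm.
  replace (fun n => Cmod (c * x n)%C ^ 2) with (fun n => Cmod c ^ 2 * Cmod (x n) ^ 2)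
    by (apply functional_extensionality; intros n; rewrite Cmod_mult; ring).
  rewrite SeriesZ_scal, sqrt_mult_alt, sqrt_pow2 by (apply pow2_ge_0 || apply Cmod_ge_0).
  reflexivity.
Qed.

Lemma l2_mul_bounded (b x : Z -> C) (M : R) :
  (forall n, Cmod (b n) <= M) -> l2 x ->
  l2 (fun n => (b n * x n)%C) /\ l2norm (fun n => (b n * x n)%C) <= M * l2norm x.
Proof.
  intros Hb Hx.
  assert (HM : 0 <= M) by (eapply Rle_trans; [apply Cmod_ge_0 | apply (Hb 0%Z)]).
  assert (Hpt : forall n, 0 <= Cmod (b n * x n)%C ^ 2 <= M ^ 2 * Cmod (x n) ^ 2).
  { intros n. rewrite Cmod_mult. split; [apply pow2_ge_0 |].
    rewrite Rpow_mult_distr. apply Rmult_le_compat_r; [apply pow2_ge_0 |].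
    apply pow_incr. split; [apply Cmod_ge_0 | apply Hb]. }
  assert (HMx := summableZ_scal (M ^ 2) _ Hx).
  split; [exact (summableZ_le _ _ Hpt HMx) |].
  unfold l2norm. rewrite <- (sqrt_pow2 M HM), <- sqrt_mult_alt by apply pow2_ge_0.
  apply sqrt_le_1_alt. rewrite <- SeriesZ_scal. exact (SeriesZ_le _ _ Hpt HMx).
Qed.

Lemma l2_shift (k : Z) (x : Z -> C) :
  l2 x -> l2 (fun n => x (n - k)%Z) /\ l2norm (fun n => x (n - k)%Z) = l2norm x.
Proof.
  intros Hx. destruct (summableZ_SeriesZ_shift k _ Hx) as [Hk Ek].
  split; [exact Hk | unfold l2norm; now rewrite Ek].
Qed.

Lemma Cmod_plus_sqr_le (u v : C) (t : R) : 0 < t ->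
  Cmod (u + v)%C ^ 2 <= (1 + t) * Cmod u ^ 2 + (1 + / t) * Cmod v ^ 2.
Proof.
  intros Ht.
  assert (Htri := Cmod_triangle u v).
  assert (Huv := Cmod_ge_0 (u + v)%C).
  assert (Hu := Cmod_ge_0 u). assert (Hv := Cmod_ge_0 v).
  (* weighted AM-GM: [2 |u| |v| <= t |u|^2 + |v|^2 / t] *)
  assert (Hamgm : 2 * Cmod u * Cmod v <= t * Cmod u ^ 2 + / t * Cmod v ^ 2).
  { assert (0 <= / t * (t * Cmod u - Cmod v) ^ 2)
      by (apply Rmult_le_pos; [left; apply Rinv_0_lt_compat; lra | apply pow2_ge_0]).
    replace (/ t * (t * Cmod u - Cmod v) ^ 2)
      with (t * Cmod u ^ 2 - 2 * Cmod u * Cmod v + / t * Cmod v ^ 2) in H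
      by (field; lra).
    lra. }
  nra.
Qed.

(* The choice [t = (Y + h) / (X + h)] balances the two weights up to [O(h)]. *)
Lemma sqr_le_of_weighted_bounds (Q X Y : R) : 0 <= X -> 0 <= Y ->
  (forall t, 0 < t -> Q <= (1 + t) * X ^ 2 + (1 + / t) * Y ^ 2) -> Q <= (X + Y) ^ 2.
Proof.
  intros HX HY HQ. apply Rle_plus_epsilon. intros eps Heps.
  set (h := eps / (2 * (X + Y) + 1)).
  assert (Hh : 0 < h) by (apply Rdiv_lt_0_compat; lra).
  assert (Hheps : 2 * h * (X + Y) <= eps).
  { unfold h. apply (Rmult_le_reg_r (2 * (X + Y) + 1)); [lra |].
    field_simplify; nra. }
  specialize (HQ ((Y + h) / (X + h)) ltac:(apply Rdiv_lt_0_compat; lra)).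
  replace ((1 + (Y + h) / (X + h)) * X ^ 2 + (1 + / ((Y + h) / (X + h))) * Y ^ 2)
    with ((X + Y + 2 * h) * (X ^ 2 / (X + h) + Y ^ 2 / (Y + h))) in HQ by (field; lra).
  assert (HXh : X ^ 2 / (X + h) <= X)
    by (apply (Rmult_le_reg_r (X + h)); [lra | field_simplify; nra]).
  assert (HYh : Y ^ 2 / (Y + h) <= Y)
    by (apply (Rmult_le_reg_r (Y + h)); [lra | field_simplify; nra]).
  nra.
Qed.

Lemma l2_plus (x y : Z -> C) : l2 x -> l2 y -> l2 (fun n => (x n + y n)%C).
Proof.
  intros Hx Hy.
  apply (summableZ_le _ (fun n => 2 * Cmod (x n) ^ 2 + 2 * Cmod (y n) ^ 2)).
  - intros n. split; [apply pow2_ge_0 |].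
    assert (H := Cmod_plus_sqr_le (x n) (y n) 1 Rlt_0_1). rewrite Rinv_1 in H. lra.
  - apply summableZ_plus; apply summableZ_scal; assumption.
Qed.

Lemma l2norm_plus_le (x y : Z -> C) : l2 x -> l2 y ->
  l2norm (fun n => (x n + y n)%C) <= l2norm x + l2norm y.
Proof.
  intros Hx Hy.
  rewrite <- (sqrt_pow2 (l2norm x + l2norm y))
    by (apply Rplus_le_le_0_compat; apply l2norm_ge0).
  apply sqrt_le_1_alt.
  apply sqr_le_of_weighted_bounds; try apply l2norm_ge0.
  intros t Ht. rewrite !l2norm_sqr by assumption.
  rewrite <- !SeriesZ_scal, <- SeriesZ_plus
    by (apply summableZ_scal; assumption).
  apply SeriesZ_le.
  - intros n. split; [apply pow2_ge_0 | apply Cmod_plus_sqr_le, Ht].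
  - apply summableZ_plus; apply summableZ_scal; assumption.
Qed.

Definition weighted_shift_sum (L : list nat) (kappa : nat -> Z) (b : nat -> Z -> C)
    (x : Z -> C) (n : Z) : C :=
  fold_right Cplus (RtoC 0) (map (fun j => Cmult (b j n) (x (n - kappa j)%Z)) L).

Lemma band_apply_weighted_shift_sum (w : nat) (a : Z -> Z -> C) :
  band_apply w a = weighted_shift_sum (seq 0 (2 * w + 1))
    (fun j => (Z.of_nat j - Z.of_nat w)%Z) (fun j => a (Z.of_nat j - Z.of_nat w)%Z).
Proof. reflexivity. Qed.

Lemma weighted_shift_sum_plus L kappa b (x y : Z -> C) :
  weighted_shift_sum L kappa b (fun n => (x n + y n)%C) =
  fun n => (weighted_shift_sum L kappa b x n + weighted_shift_sum L kappa b y n)%C.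
Proof.
  apply functional_extensionality. intros n. unfold weighted_shift_sum.
  induction L as [| j L IH]; simpl; [ring | rewrite IH; ring].
Qed.

Lemma weighted_shift_sum_scal L kappa b (c : C) (x : Z -> C) :
  weighted_shift_sum L kappa b (fun n => (c * x n)%C) =
  fun n => (c * weighted_shift_sum L kappa b x n)%C.
Proof.
  apply functional_extensionality. intros n. unfold weighted_shift_sum.
  induction L as [| j L IH]; simpl; [ring | rewrite IH; ring].
Qed.

Lemma weighted_shift_sum_bounded L kappa b :
  (forall j, In j L -> bounded_seqZ (b j)) ->
  exists K, 0 <= K /\ forall x, l2 x ->
    l2 (weighted_shift_sum L kappa b x) /\
    l2norm (weighted_shift_sum L kappa b x) <= K * l2norm x.
Proof.
  induction L as [| j L IH]; intros Hb.
  - exists 0. split; [lra |]. intros x Hx.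
    replace (weighted_shift_sum nil kappa b x) with (fun n => (RtoC 0 * x n)%C)
      by (apply functional_extensionality; intros n; unfold weighted_shift_sum; simpl; ring).
    rewrite l2norm_scal, Cmod_0. split; [now apply l2_scal | lra].
  - destruct (Hb j (or_introl eq_refl)) as [M HM].
    destruct (IH (fun i Hi => Hb i (or_intror Hi))) as [K [HK HL]].
    assert (HM0 : 0 <= M) by (eapply Rle_trans; [apply Cmod_ge_0 | apply (HM 0%Z)]).
    exists (M + K). split; [lra |]. intros x Hx.
    destruct (l2_shift (kappa j) x Hx) as [Hxk Exk].
    destruct (l2_mul_bounded (b j) _ M HM Hxk) as [Hj Ej].
    destruct (HL x Hx) as [HLx ELx].
    change (weighted_shift_sum (j :: L) kappa b x) with
      (fun n => (b j n * x (n - kappa j)%Z + weighted_shift_sum L kappa b x n)%C).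
    split; [now apply l2_plus |].
    eapply Rle_trans; [now apply l2norm_plus_le |].
    rewrite Exk in Ej. lra.
Qed.

Lemma band_apply_bounded (w : nat) (a : Z -> Z -> C) :
  (forall k : Z, (- Z.of_nat w <= k <= Z.of_nat w)%Z -> bounded_seqZ (a k)) ->
  exists K, 0 <= K /\ forall x, l2 x ->
    l2 (band_apply w a x) /\ l2norm (band_apply w a x) <= K * l2norm x.
Proof.
  intros Ha. rewrite band_apply_weighted_shift_sum.
  apply weighted_shift_sum_bounded. intros j Hj. apply in_seq in Hj. apply Ha. lia.
Qed.

Lemma Series_tail_lt (a : nat -> R) (d : R) : ex_series a -> 0 < d ->
  exists N0, forall N, (N0 <= N)%nat -> Series (fun k => if (k <? N)%nat then 0 else a k) < d.
Proof.
  intros Ha Hd.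
  destruct (proj1 (is_series_Reals _ _) (Series_correct _ Ha) d Hd) as [N0 HN0].
  exists (S N0). intros N HN.
  rewrite (Series_incr_n_aux _ N)
    by (intros k Hk; destruct (Nat.ltb_spec k N); [reflexivity | lia]).
  rewrite (Series_ext _ (fun k => a (N + k)%nat))
    by (intros k; destruct (Nat.ltb_spec (N + k) N); [lia | reflexivity]).
  specialize (HN0 (pred N) ltac:(lia)).
  rewrite (Series_incr_n a N) in HN0 by (assumption || lia).
  unfold Rdist in HN0.
  set (t := Series (fun k => a (N + k)%nat)) in *.
  replace (sum_f_R0 a (pred N) - (sum_f_R0 a (pred N) + t)) with (- t) in HN0 by ring.
  rewrite Rabs_Ropp in HN0.
  eapply Rle_lt_trans; [apply Rle_abs | exact HN0].
Qed.

(* [-N, N-1] is made of the first [N] indices of each one-sided series of [SeriesZ]. *)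
Definition in_box (N : nat) (n : Z) : bool := (- Z.of_nat N <=? n)%Z && (n <? Z.of_nat N)%Z.

Definition box_trunc (N : nat) (x : Z -> C) (n : Z) : C := if in_box N n then x n else RtoC 0.

Definition box_tail (N : nat) (x : Z -> C) (n : Z) : C := if in_box N n then RtoC 0 else x n.

Lemma box_trunc_outside N x n :
  (n < - Z.of_nat N \/ Z.of_nat N - 1 < n)%Z -> box_trunc N x n = RtoC 0.
Proof.
  intros Hn. unfold box_trunc, in_box.
  destruct (Z.leb_spec (- Z.of_nat N) n), (Z.ltb_spec n (Z.of_nat N)); simpl; auto; lia.
Qed.

Lemma box_trunc_plus_tail N x : x = fun n => (box_trunc N x n + box_tail N x n)%C.
Proof.
  apply functional_extensionality. intros n.
  unfold box_trunc, box_tail. destruct (in_box N n); ring.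
Qed.

Lemma box_trunc_eq_minus_tail N x :
  box_trunc N x = fun n => (x n + - (1) * box_tail N x n)%C.
Proof.
  apply functional_extensionality. intros n.
  unfold box_trunc, box_tail. destruct (in_box N n); ring.
Qed.

Lemma Cmod_box_tail_sqr N x n :
  Cmod (box_tail N x n) ^ 2 = if in_box N n then 0 else Cmod (x n) ^ 2.
Proof. unfold box_tail. destruct (in_box N n); [rewrite Cmod_0; ring | reflexivity]. Qed.

Lemma l2_box_tail N x : l2 x -> l2 (box_tail N x).
Proof.
  apply summableZ_le. intros n. rewrite Cmod_box_tail_sqr.
  split; destruct (in_box N n); lra || apply pow2_ge_0.
Qed.

Lemma l2norm_box_tail_lt (x : Z -> C) (d : R) : l2 x -> 0 < d ->
  exists N, l2norm (box_tail N x) < d.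
Proof.
  intros Hx Hd. destruct Hx as [Hpos Hneg].
  destruct (Series_tail_lt _ (d ^ 2 / 2) Hpos) as [N1 H1]; [nra |].
  destruct (Series_tail_lt _ (d ^ 2 / 2) Hneg) as [N2 H2]; [nra |].
  set (N := Nat.max N1 N2). exists N.
  assert (Epos : forall k : nat, in_box N (Z.of_nat k) = (k <? N)%nat).
  { intros k. unfold in_box. destruct (Nat.ltb_spec k N),
      (Z.leb_spec (- Z.of_nat N) (Z.of_nat k)), (Z.ltb_spec (Z.of_nat k) (Z.of_nat N));
      simpl; auto; lia. }
  assert (Eneg : forall k : nat, in_box N (- Z.of_nat k - 1)%Z = (k <? N)%nat).
  { intros k. unfold in_box. destruct (Nat.ltb_spec k N),
      (Z.leb_spec (- Z.of_nat N) (- Z.of_nat k - 1)),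
      (Z.ltb_spec (- Z.of_nat k - 1) (Z.of_nat N)); simpl; auto; lia. }
  unfold l2norm.
  rewrite <- (sqrt_pow2 d) by lra. apply sqrt_lt_1_alt. split.
  - apply SeriesZ_ge0; [intros n; apply pow2_ge_0 | apply l2_box_tail; split; assumption].
  - unfold SeriesZ.
    rewrite (Series_ext _ _ (fun k => eq_trans (Cmod_box_tail_sqr N x _)
                               (f_equal (fun b : bool => if b then 0 else _) (Epos k)))).
    rewrite (Series_ext _ _ (fun k => eq_trans (Cmod_box_tail_sqr N x _)
                               (f_equal (fun b : bool => if b then 0 else _) (Eneg k)))).
    specialize (H1 N (Nat.le_max_l _ _)). specialize (H2 N (Nat.le_max_r _ _)). lra.
Qed.

Lemma is_series_0 : is_series (fun _ : nat => 0) 0.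
Proof.
  unfold is_series. eapply filterlim_ext; [| apply filterlim_const].
  intros n. simpl. rewrite sum_n_const. ring.
Qed.

Lemma l2_unit_vector_exists : exists x : Z -> C, l2 x /\ l2norm x = 1.
Proof.
  exists (fun n => if (n =? 0)%Z then RtoC 1 else RtoC 0).
  assert (Hpos : is_series (fun k : nat =>
                   Cmod (if (Z.of_nat k =? 0)%Z then RtoC 1 else RtoC 0) ^ 2) 1).
  { assert (Hgeom := is_series_geom 0 ltac:(rewrite Rabs_R0; lra)).
    rewrite Rminus_0_r, Rinv_1 in Hgeom.
    refine (is_series_ext _ _ _ _ Hgeom).
    intros [| k]; simpl; [rewrite Cmod_1 | rewrite Cmod_0]; ring. }
  assert (Hneg : is_series (fun k : nat =>
                   Cmod (if (- Z.of_nat k - 1 =? 0)%Z then RtoC 1 else RtoC 0) ^ 2) 0).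
  { refine (is_series_ext _ _ _ _ is_series_0).
    intros k. replace (- Z.of_nat k - 1 =? 0)%Z with false by (symmetry; apply Z.eqb_neq; lia).
    rewrite Cmod_0. simpl. now rewrite Rmult_0_l. }
  split; [split; eexists; eassumption |].
  unfold l2norm, SeriesZ. rewrite (is_series_unique _ _ Hpos), (is_series_unique _ _ Hneg).
  rewrite Rplus_0_r. apply sqrt_1.
Qed.

Lemma Glb_Rbar_approx (E : R -> Prop) (v eps : R) :
  Glb_Rbar E = Finite v -> 0 < eps -> exists t, E t /\ t < v + eps.
Proof.
  intros Hv Heps. apply NNPP. intros Hno.
  destruct (Glb_Rbar_correct E) as [_ Hglb].
  assert (Hlb : is_lb_Rbar E (v + eps)).
  { intros t Ht. simpl. apply Rnot_lt_le. intros Hlt. apply Hno. now exists t. }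
  specialize (Hglb _ Hlb). rewrite Hv in Hglb. simpl in Hglb. lra.
Qed.

Lemma nu_le_nu_lr (A : (Z -> C) -> Z -> C) (l r : Z) : Rbar_le (nu A) (nu_lr A l r).
Proof.
  refine (is_glb_Rbar_subset _ _ _ _ _ (Glb_Rbar_correct _) (Glb_Rbar_correct _)).
  intros t [x [Hx [_ [Hx1 ->]]]]. now exists x.
Qed.

Lemma nu_finite (A : (Z -> C) -> Z -> C) : exists v, nu A = Finite v.
Proof.
  destruct l2_unit_vector_exists as [x [Hx Hx1]].
  destruct (Glb_Rbar_correct (fun t => exists x, l2 x /\ l2norm x = 1 /\ t = l2norm (A x)))
    as [Hlb Hglb].
  assert (Hle := Hlb _ (ex_intro _ x (conj Hx (conj Hx1 eq_refl)))).
  assert (Hge : Rbar_le 0 (nu A)).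
  { apply Hglb. intros t [y [_ [_ ->]]]. apply l2norm_ge0. }
  unfold nu in *. destruct (Glb_Rbar _) as [v | |]; try contradiction. now exists v.
Qed.

Section Bounded_linear_operator.

Variable A : (Z -> C) -> Z -> C.
Hypothesis A_plus : forall x y, A (fun n => (x n + y n)%C) = fun n => (A x n + A y n)%C.
Hypothesis A_scal : forall c x, A (fun n => (c * x n)%C) = fun n => (c * A x n)%C.
Variable K : R.
Hypothesis K_ge0 : 0 <= K.
Hypothesis A_bounded : forall x, l2 x -> l2 (A x) /\ l2norm (A x) <= K * l2norm x.

Lemma box_approximation (x : Z -> C) (e : R) : l2 x -> l2norm x = 1 -> 0 < e ->
  exists (N : nat) (y : Z -> C), l2 y /\
    (forall n, (n < - Z.of_nat N \/ Z.of_nat N - 1 < n)%Z -> y n = RtoC 0) /\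
    l2norm y = 1 /\ l2norm (A y) <= l2norm (A x) + e.
Proof.
  intros Hx Hx1 He.
  set (p := l2norm (A x)).
  assert (Hp : 0 <= p) by apply l2norm_ge0.
  set (d := e / (K + p + e + 1)).
  assert (Hd : 0 < d) by (apply Rdiv_lt_0_compat; lra).
  assert (Hde : d * (K + p + e + 1) = e) by (unfold d; field; lra).
  assert (Hd1 : d < 1) by nra.
  destruct (l2norm_box_tail_lt x d Hx Hd) as [N HN].
  set (xN := box_trunc N x).
  assert (Htail := l2_box_tail N x Hx).
  assert (HxN : l2 xN).
  { unfold xN. rewrite box_trunc_eq_minus_tail. apply l2_plus; [| apply l2_scal]; assumption. }
  set (s := l2norm xN).
  assert (Hs : 1 - d <= s).
  { assert (H := l2norm_plus_le _ _ HxN Htail).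
    unfold xN in H. rewrite <- box_trunc_plus_tail in H. fold xN s in H. lra. }
  assert (Hs0 : 0 < s) by lra.
  assert (HAxN : l2norm (A xN) <= p + K * d).
  { destruct (A_bounded x Hx) as [HAx _].
    destruct (A_bounded _ Htail) as [HAt HAtK].
    unfold xN. rewrite box_trunc_eq_minus_tail, A_plus, A_scal.
    eapply Rle_trans; [apply l2norm_plus_le; [| apply l2_scal]; assumption |].
    rewrite l2norm_scal, Cmod_m1.
    assert (K * l2norm (box_tail N x) <= K * d) by (apply Rmult_le_compat_l; lra).
    fold p. lra. }
  exists N, (fun n => (RtoC (/ s) * xN n)%C).
  assert (Hinv : Cmod (RtoC (/ s)) = / s)
    by (rewrite Cmod_R; apply Rabs_pos_eq; left; apply Rinv_0_lt_compat, Hs0).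
  split; [now apply l2_scal |].
  split; [intros n Hn; unfold xN; rewrite box_trunc_outside by exact Hn; ring |].
  split; [rewrite l2norm_scal, Hinv; fold s; field; lra |].
  rewrite A_scal, l2norm_scal, Hinv.
  apply (Rmult_le_reg_l s); [exact Hs0 |].
  rewrite <- Rmult_assoc, Rinv_r, Rmult_1_l by lra.
  nra.
Qed.

Lemma nu_lr_approximates_nu (eps : R) : 0 < eps ->
  exists l r : Z, Rbar_lt (nu_lr A l r) (Rbar_plus (nu A) (Finite eps)).
Proof.
  intros Heps.
  destruct (nu_finite A) as [v Hv].
  destruct (Glb_Rbar_approx _ v (eps / 2) Hv ltac:(lra)) as [t [[x [Hx [Hx1 ->]]] Ht]].
  destruct (box_approximation x (eps / 2) Hx Hx1 ltac:(lra)) as [N [y [Hy [Hsupp [Hy1 HAy]]]]].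
  exists (- Z.of_nat N)%Z, (Z.of_nat N - 1)%Z.
  rewrite Hv. simpl.
  apply Rbar_le_lt_trans with (Finite (l2norm (A y))).
  - apply (Glb_Rbar_correct _). now exists y.
  - simpl. lra.
Qed.

End Bounded_linear_operator.

Theorem corollary3p2 :
  forall (w : nat) (a : Z -> Z -> C),
    (forall k : Z, (- Z.of_nat w <= k <= Z.of_nat w)%Z -> bounded_seqZ (a k)) ->
    forall eps : R, 0 < eps ->
    exists l r : Z,
      Rbar_le (nu (band_apply w a)) (nu_lr (band_apply w a) l r) /\
      Rbar_lt (nu_lr (band_apply w a) l r) (Rbar_plus (nu (band_apply w a)) (Finite eps)).
Proof.
  intros w a Ha eps Heps.
  destruct (band_apply_bounded w a Ha) as [K [HK Hbounded]].
  rewrite band_apply_weighted_shift_sum in *.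
  destruct (nu_lr_approximates_nu _ (weighted_shift_sum_plus _ _ _)
              (weighted_shift_sum_scal _ _ _) K HK Hbounded eps Heps) as [l [r Hlt]].
  exists l, r. split; [apply nu_le_nu_lr | exact Hlt].
Qed.
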